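(* For every integer $n\ge0$ and every real $s>-1$, \[ \int_0^1 p_n(x)x^s\,dx=(-1)^n\frac{(\tfrac12-\tfrac s2)_n}{(s+1)_{n+1}},\qquad \int_0^1 q_n(x)x^s\,dx=(-1)^n\frac{(-\tfrac s2)_n}{(s+1)_{n+1}}. \]
   Context: Pochhammer symbol: $(a)_0=1$, $(a)_n=a(a+1)\cdots(a+n-1)$. For real $a$ and integer $n\ge0$, $\binom{n+a}{n}:=\frac{(a+1)_n}{n!}$. Define \[ p_n(x)=\sum_{k=0}^n\binom nk\binom{n+\frac k2}{n}(-1)^{n-k}x^k,\qquad q_n(x)=\sum_{k=0}^n\binom nk\binom{n+\frac{k-1}2}{n}(-1)^{n-k}x^k. \] *)

From Stdlib Require Import Reals Lra Arith Factorial.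
Open Scope R_scope.

Fixpoint poch (a : R) (n : nat) : R :=
  match n with
  | O => 1
  | S m => poch a m * (a + INR m)
  end.

(* Generalized binomial  binom(n + a, n) := (a+1)_n / n!. *)
Definition gbinom (n : nat) (a : R) : R := poch (a + 1) n / INR (fact n).

Definition p (n : nat) (x : R) : R :=
  sum_f_R0 (fun k => C n k * gbinom n (INR k / 2) * (-1) ^ (n - k) * x ^ k) n.

Definition q (n : nat) (x : R) : R :=
  sum_f_R0 (fun k => C n k * gbinom n ((INR k - 1) / 2) * (-1) ^ (n - k) * x ^ k) n.

(* Improper Riemann integral over (0,1]:  \int_0^1 f = l  means
   f is Riemann integrable on every [e,1] with 0<e<=1 and
   \int_e^1 f -> l as e -> 0+.  (For f continuous on [0,1] this agrees
   with the ordinary Riemann integral.) *)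
Definition improper_int_0_1 (f : R -> R) (l : R) : Prop :=
  (forall e, 0 < e <= 1 -> inhabited (Riemann_integrable f e 1)) /\
  (forall eps, 0 < eps -> exists delta, 0 < delta /\
     forall e (pr : Riemann_integrable f e 1),
       0 < e -> e < delta -> e <= 1 -> Rabs (RiemannInt pr - l) < eps).

(* The integral of a polynomial [sum_k c_k x^k] against [x^s] is
   [sum_k c_k / (k+s+1)].  For [p_n] and [q_n] this sum is [(-1)^n / n!] times
   the alternating binomial sum [sum_k (-1)^k C(n,k) g(k)] of
   [g(k) = (k/2 + c + 1)_n / (k+s+1)] (with [c = 0], resp. [c = -1/2]).
   Putting [t = (k+s+1)/2] and [a = c + 1/2 - s/2] gives
   [(k/2 + c + 1)_n = (a + t)_n = (a)_n + t Q(t)] with [Q] of degree [n-1]; the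
   [n]-th difference kills [Q], and what remains is [(a)_n] times the classical
   [sum_k (-1)^k C(n,k) / (k+s+1) = n! / (s+1)_(n+1)]. *)

From Stdlib Require Import Reals Lra Lia Factorial.
From Coquelicot Require Import Coquelicot.
Open Scope R_scope.

(* [Binomial.C n k] is not 0 for [k > n] (truncated subtraction), so the
   finite-difference calculus uses Pascal's recursion instead. *)
Fixpoint binom_pascal (n k : nat) : R :=
  match n, k with
  | _, O => 1
  | O, S _ => 0
  | S n', S k' => binom_pascal n' k' + binom_pascal n' (S k')
  end.

Lemma binom_pascal_0 n : binom_pascal n 0 = 1.
Proof. now destruct n. Qed.

Lemma binom_pascal_gt n k : (n < k)%nat -> binom_pascal n k = 0.
Proof.
  revert k; induction n; intros k Hk; destruct k; simpl; try lia; try reflexivity.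
  rewrite !IHn by lia; ring.
Qed.

Lemma binom_pascal_C n k : (k <= n)%nat -> binom_pascal n k = Binomial.C n k.
Proof.
  revert k; induction n; intros k Hk.
  - replace k with 0%nat by lia. unfold Binomial.C; simpl; field.
  - destruct k as [|k].
    + rewrite binom_pascal_0. unfold Binomial.C. rewrite Nat.sub_0_r.
      change (INR (fact 0)) with 1. field. apply INR_fact_neq_0.
    + simpl. destruct (Nat.eq_dec k n) as [->|Hkn].
      * rewrite (binom_pascal_gt n (S n)), IHn by lia.
        unfold Binomial.C. rewrite !Nat.sub_diag.
        change (INR (fact 0)) with 1. field. split; apply INR_fact_neq_0.
      * rewrite !IHn by lia. apply pascal. lia.
Qed.

Definition fdiff (f : nat -> R) (k : nat) : R := f (S k) - f k.

(* [alt_sum n f = (-1)^n Delta^n f 0]. *)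
Definition alt_sum (n : nat) (f : nat -> R) : R :=
  sum_f_R0 (fun k => binom_pascal n k * (-1) ^ k * f k) n.

Lemma alt_sum_ext n f g : (forall k, f k = g k) -> alt_sum n f = alt_sum n g.
Proof. intros Hfg. apply sum_eq. intros k _. now rewrite Hfg. Qed.

Lemma alt_sum_plus n f g : alt_sum n (fun k => f k + g k) = alt_sum n f + alt_sum n g.
Proof. unfold alt_sum. rewrite <- plus_sum. apply sum_eq. intros. ring. Qed.

Lemma alt_sum_scal n c f : alt_sum n (fun k => c * f k) = c * alt_sum n f.
Proof. unfold alt_sum. rewrite scal_sum. apply sum_eq. intros. ring. Qed.

Lemma alt_sum_S n f : alt_sum (S n) f = - alt_sum n (fdiff f).
Proof.
  set (g k := binom_pascal n k * (-1) ^ k * f k).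
  set (h k := binom_pascal n k * (-1) ^ k * f (S k)).
  assert (Hg : sum_f_R0 g (S n) = f 0%nat + sum_f_R0 (fun k => g (S k)) n).
  { rewrite decomp_sum by lia. unfold g. rewrite binom_pascal_0. simpl. ring. }
  assert (Hg' : sum_f_R0 g (S n) = alt_sum n f).
  { change (alt_sum n f) with (sum_f_R0 g n). rewrite tech5.
    unfold g at 2. rewrite binom_pascal_gt by lia. ring. }
  assert (HS : alt_sum (S n) f
               = f 0%nat + (sum_f_R0 (fun k => g (S k)) n - sum_f_R0 h n)).
  { unfold alt_sum. rewrite decomp_sum by lia. simpl pred.
    rewrite <- minus_sum. rewrite binom_pascal_0. simpl (_ ^ 0).
    f_equal; [ring|]. apply sum_eq. intros k _. unfold g, h. simpl. ring. }
  assert (Hd : alt_sum n (fdiff f) = sum_f_R0 h n - alt_sum n f).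
  { unfold alt_sum. rewrite <- minus_sum. apply sum_eq. intros k _.
    unfold h, fdiff. ring. }
  lra.
Qed.

(* Degree at most [d], encoded as the vanishing of the [(d+1)]-st difference. *)
Fixpoint has_deg_le (d : nat) (f : nat -> R) : Prop :=
  match d with
  | O => forall k, f (S k) = f k
  | S d' => has_deg_le d' (fdiff f)
  end.

Lemma has_deg_le_ext d f g :
  (forall k, f k = g k) -> has_deg_le d f -> has_deg_le d g.
Proof.
  revert f g; induction d; simpl; intros f g Hfg Hf.
  - intros k. rewrite <- !Hfg. apply Hf.
  - apply (IHd (fdiff f)); auto. intros k. unfold fdiff. now rewrite !Hfg.
Qed.

Lemma has_deg_le_plus d f g :
  has_deg_le d f -> has_deg_le d g -> has_deg_le d (fun k => f k + g k).
Proof.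
  revert f g; induction d; simpl; intros f g Hf Hg.
  - intros k. now rewrite Hf, Hg.
  - refine (has_deg_le_ext _ _ _ _ (IHd _ _ Hf Hg)). intros k. unfold fdiff. ring.
Qed.

Lemma has_deg_le_scal d c f : has_deg_le d f -> has_deg_le d (fun k => c * f k).
Proof.
  revert f; induction d; simpl; intros f Hf.
  - intros k. now rewrite Hf.
  - refine (has_deg_le_ext _ _ _ _ (IHd _ Hf)). intros k. unfold fdiff. ring.
Qed.

Lemma has_deg_le_const d c : has_deg_le d (fun _ => c).
Proof.
  induction d; simpl.
  - reflexivity.
  - refine (has_deg_le_ext _ (fun _ => 0 * c) _ _ (has_deg_le_scal _ 0 _ IHd)).
    intros k. unfold fdiff. ring.
Qed.

Lemma has_deg_le_shift d f : has_deg_le d f -> has_deg_le d (fun k => f (S k)).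
Proof.
  revert f; induction d; simpl; intros f Hf.
  - intros k. apply Hf.
  - exact (IHd (fdiff f) Hf).
Qed.

Lemma has_deg_le_mul_affine d f al be :
  has_deg_le d f -> has_deg_le (S d) (fun k => f k * (al * INR k + be)).
Proof.
  revert f; induction d; intros f Hf.
  - simpl. intros k. unfold fdiff. rewrite !Hf, !S_INR. ring.
  - change (has_deg_le (S d) (fdiff (fun k => f k * (al * INR k + be)))).
    simpl in Hf.
    (* Leibniz rule for [fdiff] *)
    apply (has_deg_le_ext _ (fun k => fdiff f k * (al * INR k + be) + al * f (S k))).
    + intros k. unfold fdiff. rewrite S_INR. ring.
    + apply has_deg_le_plus.
      * now apply IHd.
      * apply has_deg_le_scal. exact (has_deg_le_shift (S d) f Hf).
Qed.

Lemma alt_sum_deg_lt d f n : has_deg_le d f -> (d < n)%nat -> alt_sum n f = 0.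
Proof.
  revert f n; induction d; intros f [|n] Hf Hn; try lia; rewrite alt_sum_S.
  - rewrite (alt_sum_ext _ _ (fun k => 0 * 1)).
    + rewrite alt_sum_scal. ring.
    + intros k. unfold fdiff. rewrite Hf. ring.
  - rewrite (IHd _ n Hf) by lia. ring.
Qed.

Lemma poch_S_l m y : poch y (S m) = y * poch (y + 1) m.
Proof.
  revert y; induction m; intros y.
  - simpl. ring.
  - change (poch y (S (S m))) with (poch y (S m) * (y + INR (S m))).
    rewrite IHm, S_INR.
    change (poch (y + 1) (S m)) with (poch (y + 1) m * (y + 1 + INR m)). ring.
Qed.

Lemma poch_pos m y : 0 < y -> 0 < poch y m.
Proof.
  intros Hy. induction m; simpl.
  - lra.
  - apply Rmult_lt_0_compat; auto. pose proof (pos_INR m). lra.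
Qed.

Lemma poch_1 n : poch 1 n = INR (fact n).
Proof.
  induction n; simpl poch.
  - reflexivity.
  - rewrite IHn. change (fact (S n)) with (S n * fact n)%nat.
    rewrite mult_INR, S_INR. ring.
Qed.

(* [poch_quot a n t = ((a + t)_n - (a)_n) / t], a polynomial of degree [n - 1] in [t]. *)
Fixpoint poch_quot (a : R) (n : nat) (t : R) : R :=
  match n with
  | O => 0
  | S m => poch a m + poch_quot a m t * (a + INR m + t)
  end.

Lemma poch_plus n a t : poch (a + t) n = poch a n + t * poch_quot a n t.
Proof. induction n; simpl; [|rewrite IHn]; ring. Qed.

Lemma has_deg_le_poch_quot n a al be :
  has_deg_le n (fun k => poch_quot a (S n) (al * INR k + be)).
Proof.
  induction n.
  - intros k. simpl. ring.
  - apply (has_deg_le_ext _ (fun k => poch a (S n)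
        + poch_quot a (S n) (al * INR k + be) * (al * INR k + (a + INR (S n) + be)))).
    + intros k. change (poch_quot a (S (S n)) ?t)
        with (poch a (S n) + poch_quot a (S n) t * (a + INR (S n) + t)). ring.
    + apply has_deg_le_plus.
      * apply has_deg_le_const.
      * now apply has_deg_le_mul_affine.
Qed.

Lemma alt_sum_poch_quot n a al be :
  alt_sum n (fun k => poch_quot a n (al * INR k + be)) = 0.
Proof.
  destruct n as [|n].
  - unfold alt_sum. simpl. ring.
  - exact (alt_sum_deg_lt n _ _ (has_deg_le_poch_quot n a al be) (Nat.lt_succ_diag_r n)).
Qed.

Lemma alt_sum_inv_poch n m x : 0 < x ->
  alt_sum n (fun k => / poch (x + INR k) m) = poch (INR m) n / poch x (n + m).
Proof.
  revert m x; induction n; intros m x Hx.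
  - unfold alt_sum. simpl. rewrite Rplus_0_r. field. apply Rgt_not_eq, poch_pos; lra.
  - rewrite alt_sum_S.
    rewrite (alt_sum_ext _ _ (fun k => - INR m * / poch (x + INR k) (S m))).
    + rewrite alt_sum_scal, IHn, Nat.add_succ_r, (poch_S_l n (INR m)), S_INR by lra.
      simpl (S n + m)%nat. field. apply Rgt_not_eq, poch_pos; lra.
    + intros k. unfold fdiff. rewrite S_INR, <- Rplus_assoc.
      set (y := x + INR k).
      assert (Hy : 0 < y) by (unfold y; pose proof (pos_INR k); lra).
      pose proof (poch_pos m y Hy). pose proof (pos_INR m).
      assert (Hshift : poch (y + 1) m = poch y m * (y + INR m) / y).
      { apply (Rmult_eq_reg_l y); [|lra]. rewrite <- poch_S_l. simpl poch. field. lra. }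
      simpl poch. rewrite Hshift. field. lra.
Qed.

Lemma pow_m1_sub n i : (i <= n)%nat -> (-1) ^ (n - i) = (-1) ^ n * (-1) ^ i.
Proof.
  intros Hi. replace n with ((n - i) + i)%nat at 2 by lia.
  rewrite pow_add, Rmult_assoc, <- Rpow_mult_distr.
  replace (-1 * -1) with 1 by ring. rewrite pow1. ring.
Qed.

Lemma binom_moment_sum n (h : nat -> R) c s : -1 < s ->
  (forall k, h k = INR k / 2 + c) ->
  sum_f_R0 (fun k => Binomial.C n k * gbinom n (h k) * (-1) ^ (n - k) / (INR k + s + 1)) n
  = (-1) ^ n * poch (c + 1/2 - s/2) n / poch (s + 1) (n + 1).
Proof.
  intros hs hh.
  set (a := c + 1/2 - s/2).
  set (g k := poch (h k + 1) n / (INR k + s + 1)).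
  transitivity ((-1) ^ n / INR (fact n) * alt_sum n g).
  { unfold alt_sum. rewrite scal_sum. apply sum_eq. intros k Hk.
    rewrite binom_pascal_C, (pow_m1_sub n k) by lia. unfold g, gbinom. field.
    pose proof (pos_INR k). split; [apply INR_fact_neq_0 | lra]. }
  (* with [t = (k + s + 1) / 2]: [(k/2 + c + 1)_n = (a)_n + t * poch_quot a n t] *)
  rewrite (alt_sum_ext _ g (fun k => poch a n * / poch (s + 1 + INR k) 1
                                     + / 2 * poch_quot a n (/ 2 * INR k + (s + 1) / 2))).
  2:{ intros k. unfold g. rewrite hh.
      replace (INR k / 2 + c + 1) with (a + (/ 2 * INR k + (s + 1) / 2)) by (unfold a; field).
      rewrite poch_plus. simpl poch. field. pose proof (pos_INR k). lra. }
  rewrite alt_sum_plus, !alt_sum_scal, alt_sum_poch_quot, alt_sum_inv_poch by lra.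
  simpl (INR 1). rewrite poch_1. field.
  split; [apply Rgt_not_eq, poch_pos; lra | apply INR_fact_neq_0].
Qed.

Lemma is_RInt_pow_Rpower k s e : -1 < s -> 0 < e ->
  is_RInt (fun x => x ^ k * Rpower x s) e 1
    ((1 - Rpower e (INR k + s + 1)) / (INR k + s + 1)).
Proof.
  intros hs he.
  set (r := INR k + s + 1).
  assert (hr : 0 < r) by (unfold r; pose proof (pos_INR k); lra).
  assert (Hpos : forall x, Rmin e 1 <= x -> 0 < x).
  { intros x Hx. apply Rlt_le_trans with (2 := Hx). apply Rmin_glb_lt; lra. }
  apply (is_RInt_ext (fun x => Rpower x (r - 1))).
  { intros x [Hx _]. replace (r - 1) with (INR k + s) by (unfold r; ring).
    rewrite Rpower_plus, Rpower_pow by (apply Hpos; lra). reflexivity. }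
  replace ((1 - Rpower e r) / r)
    with (minus ((fun x => / r * Rpower x r) 1) ((fun x => / r * Rpower x r) e)).
  2:{ unfold minus, plus, opp; simpl. unfold Rpower at 1. rewrite ln_1, Rmult_0_r, exp_0.
      field. lra. }
  assert (Hder : forall x, 0 < x -> is_derive (fun x => Rpower x r) x (r * Rpower x (r - 1))).
  { intros x Hx. apply is_derive_Reals, derivable_pt_lim_power, Hx. }
  apply (is_RInt_derive (fun x => / r * Rpower x r)).
  - intros x [Hx _].
    replace (Rpower x (r - 1)) with (/ r * (r * Rpower x (r - 1))) by (field; lra).
    apply is_derive_scal, Hder, Hpos, Hx.
  - intros x [Hx _]. apply (ex_derive_continuous (fun x => Rpower x (r - 1))).
    eexists. apply is_derive_Reals, derivable_pt_lim_power, Hpos, Hx.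
Qed.

Lemma is_RInt_poly_Rpower (c : nat -> R) n s e : -1 < s -> 0 < e ->
  is_RInt (fun x => sum_f_R0 (fun k => c k * x ^ k) n * Rpower x s) e 1
    (sum_f_R0 (fun k => c k * ((1 - Rpower e (INR k + s + 1)) / (INR k + s + 1))) n).
Proof.
  intros hs he.
  assert (Hk : forall k, is_RInt (fun x => c k * x ^ k * Rpower x s) e 1
                 (c k * ((1 - Rpower e (INR k + s + 1)) / (INR k + s + 1)))).
  { intros k. apply (is_RInt_ext (fun x => scal (c k) (x ^ k * Rpower x s))).
    - intros x _. unfold scal; simpl. unfold mult; simpl. ring.
    - exact (is_RInt_scal _ _ _ (c k) _ (is_RInt_pow_Rpower k s e hs he)). }
  induction n as [|n IHn].
  - exact (Hk 0%nat).
  - apply (is_RInt_ext (fun x => plus (sum_f_R0 (fun k => c k * x ^ k) n * Rpower x s)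
                                      (c (S n) * x ^ S n * Rpower x s))).
    + intros x _. unfold plus; simpl. ring.
    + exact (is_RInt_plus _ _ _ _ _ _ IHn (Hk (S n))).
Qed.

Lemma Rabs_sum_Rpower_le (a : nat -> R) n r e : 0 < e <= 1 ->
  Rabs (sum_f_R0 (fun k => a k * Rpower e (INR k + r)) n)
  <= sum_f_R0 (fun k => Rabs (a k)) n * Rpower e r.
Proof.
  intros he. eapply Rle_trans; [apply Rsum_abs|].
  rewrite Rmult_comm, scal_sum. apply sum_Rle. intros k _.
  rewrite Rabs_mult, Rpower_plus, Rpower_pow by lra.
  assert (0 < Rpower e r) by apply exp_pos.
  assert (0 < e ^ k) by (apply pow_lt; lra).
  assert (e ^ k <= 1) by (rewrite <- (pow1 k); apply pow_incr; lra).
  apply Rmult_le_compat_l; [apply Rabs_pos|].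
  rewrite Rabs_right by nra. nra.
Qed.

Lemma improper_int_0_1_of_rate f (F : R -> R) l M r : 0 < r ->
  (forall e, 0 < e <= 1 -> is_RInt f e 1 (F e)) ->
  (forall e, 0 < e <= 1 -> Rabs (F e - l) <= M * Rpower e r) ->
  improper_int_0_1 f l.
Proof.
  intros hr HF Hrate. split.
  - intros e he. constructor. apply ex_RInt_Reals_0. exists (F e). now apply HF.
  - intros eps Heps.
    set (d := eps / (Rabs M + 1)).
    assert (Hd : 0 < d) by (apply Rdiv_lt_0_compat; pose proof (Rabs_pos M); lra).
    exists (Rpower d (/ r)). split; [apply exp_pos|].
    intros e pr he hed he1.
    rewrite <- RInt_Reals, (is_RInt_unique _ _ _ _ (HF e (conj he he1))).
    assert (Her : Rpower e r < d).
    { rewrite <- (Rpower_1 d Hd), <- (Rinv_l r) by lra.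
      rewrite <- Rpower_mult. apply Rlt_Rpower_l; lra. }
    assert (0 < Rpower e r) by apply exp_pos.
    assert (HM : Rabs M * d < eps).
    { pose proof (Rabs_pos M).
      replace (Rabs M * d) with (eps - d) by (unfold d; field; lra). lra. }
    eapply Rle_lt_trans; [apply (Hrate e (conj he he1))|].
    apply Rle_lt_trans with (Rabs M * Rpower e r).
    { apply Rmult_le_compat_r; [lra | apply Rle_abs]. }
    apply Rle_lt_trans with (2 := HM). apply Rmult_le_compat_l; [apply Rabs_pos | lra].
Qed.

Lemma improper_int_poly_Rpower (c : nat -> R) n s : -1 < s ->
  improper_int_0_1 (fun x => sum_f_R0 (fun k => c k * x ^ k) n * Rpower x s)
    (sum_f_R0 (fun k => c k / (INR k + s + 1)) n).
Proof.
  intros hs.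
  eapply (improper_int_0_1_of_rate _ _ _
           (sum_f_R0 (fun k => Rabs (c k / (INR k + s + 1))) n) (s + 1)); [lra| |].
  - intros e [he _]. now apply is_RInt_poly_Rpower.
  - intros e he.
    rewrite Rabs_minus_sym, <- minus_sum.
    eapply Rle_trans; [|apply Rabs_sum_Rpower_le, he].
    right. f_equal. apply sum_eq. intros k _. rewrite <- Rplus_assoc. field.
    pose proof (pos_INR k). lra.
Qed.

Theorem mainTheorem3 (n : nat) (s : R) (hs : -1 < s) :
  improper_int_0_1 (fun x => p n x * Rpower x s)
    ((-1) ^ n * poch (1/2 - s/2) n / poch (s + 1) (n + 1)) /\
  improper_int_0_1 (fun x => q n x * Rpower x s)
    ((-1) ^ n * poch (- (s/2)) n / poch (s + 1) (n + 1)).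
Proof.
  split.
  - replace (1/2 - s/2) with (0 + 1/2 - s/2) by ring.
    rewrite <- (binom_moment_sum n (fun k => INR k / 2) 0 s hs) by (intros; ring).
    exact (improper_int_poly_Rpower _ n s hs).
  - replace (- (s/2)) with (- (1/2) + 1/2 - s/2) by ring.
    rewrite <- (binom_moment_sum n (fun k => (INR k - 1) / 2) (- (1/2)) s hs)
      by (intros; field).
    exact (improper_int_poly_Rpower _ n s hs).
Qed.
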